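(* Let $\mathcal{C}$ be a PL-cograph and $P,Q,R$ distinct points with $e=\mathcal{C}(P,Q)\neq f=\mathcal{C}(P,R)$. Then $P$ is the unique point incident to both an edge of value $e$ and an edge of value $f$: if $P',Q',R'$ are points with $\mathcal{C}(P',Q')=e$ and $\mathcal{C}(P',R')=f$, then $P'=P$.
   Context: A cograph is a function $\mathcal{C}$ assigning to each unordered pair $\{P,Q\}$ of distinct elements of a point set a value $\mathcal{C}(P,Q)$ (an edge). A PL-cograph is a cograph satisfying: (1) for distinct points $P,Q,R$, if $\mathcal{C}(P,Q)=\mathcal{C}(Q,R)$ then $\mathcal{C}(P,Q)=\mathcal{C}(P,R)$; (2) for distinct points $P,Q,R,S$, if $\mathcal{C}(P,Q)=\mathcal{C}(R,S)$ then $\mathcal{C}(P,Q)=\mathcal{C}(P,R)=\mathcal{C}(P,S)=\mathcal{C}(Q,R)=\mathcal{C}(Q,S)$. *)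

(* A cograph on a point type T with edge values in V: a function on pairs of
   points, symmetric (so it is a function on unordered pairs); its values on
   the diagonal (P,P) are irrelevant and never used. *)
Definition cograph {T V : Type} (C : T -> T -> V) : Prop :=
  forall P Q : T, P <> Q -> C P Q = C Q P.

Definition PL_cograph {T V : Type} (C : T -> T -> V) : Prop :=
  cograph C /\
  (forall P Q R : T, P <> Q -> P <> R -> Q <> R ->
     C P Q = C Q R -> C P Q = C P R) /\
  (forall P Q R S : T, P <> Q -> P <> R -> P <> S -> Q <> R -> Q <> S -> R <> S ->
     C P Q = C R S ->
     C P Q = C P R /\ C P Q = C P S /\ C P Q = C Q R /\ C P Q = C Q S).

(* If two edges AB and A'B' carry the same value and A <> A', then so does AA':
   trivially when one of the edges is AA', by axiom (1) when they share the
   endpoint B, by axiom (2) when they are disjoint.  Were P' <> P, the edge PP'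
   would thus carry both e (from PQ, P'Q') and f (from PR, P'R'). *)
From Stdlib Require Import Classical.

Lemma PL_cograph_join_equal_edges (T V : Type) (C : T -> T -> V) :
  PL_cograph C ->
  forall A B A' B' : T, A <> B -> A' <> B' -> A <> A' ->
    C A B = C A' B' -> C A A' = C A B.
Proof.
  intros [Hsym [Hpath Hdisj]] A B A' B' hAB hA'B' hAA' He.
  destruct (classic (A' = B)) as [-> | hA'B]; [reflexivity |].
  destruct (classic (B' = A)) as [-> | hB'A].
  { rewrite He. apply Hsym. congruence. }
  destruct (classic (B' = B)) as [-> | hB'B].
  - symmetry. apply Hpath; try congruence.
    rewrite He. apply Hsym. congruence.
  - symmetry. apply (Hdisj A B A' B'); congruence.
Qed.

Theorem mainTheorem20 (T V : Type) (C : T -> T -> V) (P Q R : T) :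
  PL_cograph C ->
  P <> Q -> P <> R -> Q <> R ->
  C P Q <> C P R ->
  forall P' Q' R' : T, P' <> Q' -> P' <> R' ->
    C P' Q' = C P Q -> C P' R' = C P R -> P' = P.
Proof.
  intros HC hPQ hPR _ hef P' Q' R' hP'Q' hP'R' eQ eR.
  apply NNPP. intros hP'P. apply hef.
  assert (e_PP' : C P' P = C P' Q')
    by (apply (PL_cograph_join_equal_edges _ _ _ HC _ _ _ Q); auto).
  assert (f_PP' : C P' P = C P' R')
    by (apply (PL_cograph_join_equal_edges _ _ _ HC _ _ _ R); auto).
  congruence.
Qed.
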